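(* Let $d\ge1$, $m\in\mathbb{N}$ ($m\ge1$), and let $A_0,A_1\in\mathbb{R}^{d\times d}$ be constant matrices. Let $G:\mathbb{Z}_0^\infty\to\mathbb{R}^{d\times d}$ satisfy $A_1G(u)=G(u)A_1$ for all $u\in\mathbb{Z}_0^\infty$, and let $Z$ be the discrete function defined in the context. Then \[ X(u)=\sum_{r=1}^{u}Z(u-m-r)\,G(r-1),\qquad u\in\mathbb{Z}_{-m}^{\infty} \] (an empty sum being $\Theta$), is a solution of \[ \Delta X(u)=A_0X(u-m)+X(u-m)A_1+G(u),\ \ u\in\mathbb{Z}_0^{\infty},\qquad X(u)=\Theta,\ \ u\in\mathbb{Z}_{-m}^{0}. \]
   Context: $\Theta$ and $I$ denote the $d\times d$ zero and identity matrices; $\mathbb{Z}_a^b=\{a,a+1,\dots,b\}$ (with $\mathbb{Z}_a^\infty=\{a,a+1,\dots\}$ and $\mathbb{Z}_{-\infty}^b=\{\dots,b-1,b\}$); $\Delta X(u)=X(u+1)-X(u)$. For integers $a$ and $r\ge0$, $\binom{a}{r}=a(a-1)\cdots(a-r+1)/r!$. Define matrices $Q_{r+1}(rm)$, $r=0,1,2,\dots$, by $Q_1(0)=I$ and $Q_{r+1}(rm)=A_0Q_r((r-1)m)+Q_r((r-1)m)A_1$ for $r\ge1$. Define $Z(u)=\Theta$ for $u\in\mathbb{Z}_{-\infty}^{-m-1}$, $Z(u)=I$ for $u\in\mathbb{Z}_{-m}^{0}$, and for each integer $n\ge1$ and $u\in\mathbb{Z}_{(n-1)(m+1)+1}^{n(m+1)}$,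 \[ Z(u)=\sum_{r=0}^{n}\binom{u-(r-1)m}{r}Q_{r+1}(rm). \] *)

From HB Require Import structures.
From mathcomp Require Import all_boot all_order all_algebra.
From mathcomp Require Import reals.
Set Implicit Arguments. Unset Strict Implicit. Unset Printing Implicit Defensive.
Import Order.TTheory GRing.Theory Num.Theory.
Local Open Scope ring_scope.

Section Defs.
Variables (R : realType) (d : nat).

Definition binz (a : int) (r : nat) : R :=
  (\prod_(i < r) (a - (i : nat)%:Z)%:~R) / (r`!)%:R.

(* Qmat A0 A1 r = Q_{r+1}(r m) :  Q_1(0) = I,
   Q_{r+1}(rm) = A0 Q_r((r-1)m) + Q_r((r-1)m) A1. *)
Fixpoint Qmat (A0 A1 : 'M[R]_d) (r : nat) : 'M[R]_d :=
  match r with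
  | 0 => 1%:M
  | r'.+1 => A0 *m Qmat A0 A1 r' + Qmat A0 A1 r' *m A1
  end.

(* The block index n >= 1 with u in Z_{(n-1)(m+1)+1}^{n(m+1)}, for u >= 1 *)
Definition blockn (m : nat) (u : int) : nat := ((`|u|%N).-1 %/ m.+1).+1.

Definition Zfun (m : nat) (A0 A1 : 'M[R]_d) (u : int) : 'M[R]_d :=
  if u < - (m%:Z) then 0
  else if u <= 0 then 1%:M
  else \sum_(r < (blockn m u).+1)
         binz (u - ((r : nat)%:Z - 1) * m%:Z) r *: Qmat A0 A1 r.

Definition Xsol (m : nat) (A0 A1 : 'M[R]_d) (G : nat -> 'M[R]_d) (u : int)
  : 'M[R]_d :=
  if 0 < u then
    \sum_(1 <= r < (`|u|%N).+1) Zfun m A0 A1 (u - m%:Z - r%:Z) *m G r.-1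
  else 0.

End Defs.

From HB Require Import structures.
From mathcomp Require Import all_boot all_order all_algebra.
From mathcomp Require Import reals.
From mathcomp Require Import zify.
Set Implicit Arguments. Unset Strict Implicit. Unset Printing Implicit Defensive.
Import Order.TTheory GRing.Theory Num.Theory.
Local Open Scope ring_scope.

(* Shifted by m, the function Z is a binomial sum: Z(k - m) = sum_r C(k - r m, r) Q_r
   for every k >= 0. Pascal's rule C(k+1 - (r+1)m, r+1) = C(k - (r+1)m, r+1) + C(k - m - r m, r)
   and Q_(r+1) = A0 Q_r + Q_r A1 then make Z a fundamental matrix of the delay equation:
   Delta Z(u) = A0 Z(u-m) + Z(u-m) A1 for u >= -m, Z(-m) = I, and Z = 0 below -m.
   X is the discrete convolution of G with Z, so
   Delta X(u) = Z(-m) G(u) + sum_r Delta Z(u-m-r) G(r-1), and since G commutes with A1 the operator M |-> A0 M + M A1 passes through the factor G. *)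

Lemma big_ord_eq0_ge (V : zmodType) (F : nat -> V) n N : (n <= N)%N ->
  (forall i, (n <= i < N)%N -> F i = 0) ->
  \sum_(i < N) F i = \sum_(i < n) F i.
Proof.
move=> le_nN F0; rewrite -(subnKC le_nN) big_split_ord /= [X in _ + X]big1 ?addr0 // => i _.
by apply: F0; have := ltn_ord i; lia.
Qed.

Lemma binz_nat (R : realType) (a r : nat) : binz R a r = 'C(a, r)%:R.
Proof.
have prod_ffact : \prod_(i < r) ((a%:Z - (i : nat)%:Z)%:~R : R) = (a ^_ r)%:R.
  elim: r => [|r IHr]; first by rewrite big_ord0 ffactn0.
  rewrite big_ord_recr /= IHr ffactnSr natrM.
  have [/subzn -> // | lt_ar] := leqP r a.
  by rewrite ffact_small // !mul0r.
by rewrite /binz prod_ffact -bin_ffact natrM mulfK // pnatr_eq0 -lt0n fact_gt0.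
Qed.

Lemma bin_delay_small m k r : (k < r * m.+1)%N -> 'C(k - r * m, r) = 0%N.
Proof. by move=> lt_k; rewrite bin_small //; rewrite mulnS in lt_k; lia. Qed.

Lemma bin_delay_pascal m k r : (m <= k)%N ->
  'C(k.+1 - r.+1 * m, r.+1) = ('C(k - r.+1 * m, r.+1) + 'C(k - m - r * m, r))%N.
Proof.
move=> le_mk; rewrite mulSn !subnDA.
have [le_rm | lt_rm] := leqP (r * m) (k - m).
  by rewrite -binS; congr 'C(_, _); lia.
have -> : (k - m - r * m = 0)%N by lia.
by rewrite (_ : k.+1 - m - r * m = 0)%N ?bin0n //=; case: r lt_rm => //= r; lia.
Qed.

Section Fundamental.
Variables (R : realType) (d m : nat) (A0 A1 : 'M[R]_d).

Definition sylvester (M : 'M[R]_d) := A0 *m M + M *m A1.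

Lemma sylvester0 : sylvester 0 = 0.
Proof. by rewrite /sylvester mulmx0 mul0mx addr0. Qed.

Lemma sylvester_sum n (F : 'I_n -> 'M[R]_d) :
  sylvester (\sum_(i < n) F i) = \sum_(i < n) sylvester (F i).
Proof. by rewrite /sylvester mulmx_sumr mulmx_suml -big_split. Qed.

Lemma sylvester_mulmxr M N : A1 *m N = N *m A1 ->
  sylvester (M *m N) = sylvester M *m N.
Proof. by move=> A1N; rewrite /sylvester mulmxDl !mulmxA -!mulmxA A1N. Qed.

(* Truncated subtraction is harmless: when r m > k the coefficient is C(0, r) = 0 for r > 0. *)
Definition Zbin (k : nat) :=
  \sum_(r < k.+1) 'C(k - r * m, r)%:R *: Qmat A0 A1 r.

Lemma Zbin_trunc k N : (k < N * m.+1)%N ->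
  Zbin k = \sum_(r < N) 'C(k - r * m, r)%:R *: Qmat A0 A1 r.
Proof.
move=> lt_kN; pose F r := 'C(k - r * m, r)%:R *: Qmat A0 A1 r.
have F0 r : (k < r * m.+1)%N -> F r = 0.
  by rewrite /F => /bin_delay_small ->; rewrite scale0r.
rewrite /Zbin (big_ord_eq0_ge (F := F) (n := minn N k.+1)) ?geq_minr //; last first.
  move=> r /andP[le_r lt_r]; apply: F0.
  apply: leq_trans lt_kN _; rewrite leq_mul2r; lia.
rewrite [RHS](big_ord_eq0_ge (F := F) (n := minn N k.+1)) ?geq_minl // => r /andP[le_r lt_r].
by apply: F0; rewrite mulnS; lia.
Qed.

Lemma Zbin_recurrence k : (m <= k)%N -> Zbin k.+1 - Zbin k = sylvester (Zbin (k - m)).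
Proof.
move=> le_mk; rewrite (@Zbin_trunc k k.+2) ?(@Zbin_trunc (k - m) k.+1); first last.
- by rewrite mulnS; lia.
- by rewrite mulnS; lia.
rewrite /Zbin big_ord_recl [X in _ - X]big_ord_recl /= !mul0n !subn0 !bin0.
rewrite opprD addrACA subrr add0r.
rewrite -sumrB /sylvester mulmx_sumr mulmx_suml -big_split /=.
apply: eq_bigr => r _; rewrite /bump /= add1n bin_delay_pascal // natrD scalerDl.
by rewrite addrAC subrr add0r -scalemxAr -scalemxAl -scalerDr.
Qed.

Lemma Zfun_lt u : u < - m%:Z -> Zfun m A0 A1 u = 0.
Proof. by rewrite /Zfun => ->. Qed.

Lemma Xsol_sum (G : nat -> 'M[R]_d) v n : v <= n%:Z ->
  Xsol m A0 A1 G v = \sum_(j < n) Zfun m A0 A1 (v - m%:Z - j.+1%:Z) *m G j.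
Proof.
move=> le_vn; rewrite /Xsol; case: ifP => [v_gt0 | v_le0]; last first.
  by rewrite big1 // => j _; rewrite Zfun_lt ?mul0mx //; lia.
have [k v_k] : exists k : nat, v = k%:Z by exists `|v|%N; lia.
subst v; pose F j := Zfun m A0 A1 (k%:Z - m%:Z - j.+1%:Z) *m G j.
rewrite absz_nat big_add1 /= big_mkord [RHS](big_ord_eq0_ge (F := F) (n := k)); last 2 first.
- lia.
- by move=> j /andP[le_kj _]; rewrite /F Zfun_lt ?mul0mx //; lia.
by apply: eq_bigr => j _; rewrite /F; congr (Zfun _ _ _ _ *m _); lia.
Qed.

Hypothesis m_gt0 : (0 < m)%N.

Lemma Zbin_small k : (k <= m)%N -> Zbin k = 1%:M.
Proof.
move=> le_km; rewrite (@Zbin_trunc k 1) ?big_ord1 ?mul0n ?subn0 ?bin0 ?scale1r //.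
by rewrite mul1n ltnS (leq_trans le_km).
Qed.

Lemma Zfun_Zbin k : Zfun m A0 A1 (k%:Z - m%:Z) = Zbin k.
Proof.
rewrite /Zfun ifF; last lia.
have [le_km | lt_mk] := leqP k m; first by rewrite ifT ?Zbin_small //; lia.
rewrite ifF; last lia.
rewrite subzn ?(ltnW lt_mk) // /blockn absz_nat.
have q_lo := leq_divM (k - m).-1 m.+1.
have q_hi := @ltn_ceil (k - m).-1 m.+1 isT.
set q := ((k - m).-1 %/ m.+1)%N in q_lo q_hi *.
rewrite (@Zbin_trunc k q.+2); last by nia.
apply: eq_bigr => r _; rewrite -binz_nat; congr (binz _ _ _ *: _).
have : (r * m <= q.+1 * m)%N by rewrite leq_mul2r -ltnS ltn_ord orbT.
nia.
Qed.

Lemma Zfun_recurrence u : - m%:Z <= u ->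
  Zfun m A0 A1 (u + 1) - Zfun m A0 A1 u = sylvester (Zfun m A0 A1 (u - m%:Z)).
Proof.
move=> ge_u; have [k ->] : exists k : nat, u = k%:Z - m%:Z by exists `|(u + m%:Z)%R|%N; lia.
rewrite (_ : k%:Z - m%:Z + 1 = k.+1%:Z - m%:Z) ?Zfun_Zbin; last lia.
have [le_mk | lt_km] := leqP m k.
  by rewrite (_ : k%:Z - m%:Z - m%:Z = (k - m)%N%:Z - m%:Z) ?Zfun_Zbin ?Zbin_recurrence //; lia.
by rewrite Zfun_lt ?sylvester0 ?Zbin_small ?subrr //; lia.
Qed.

End Fundamental.

Theorem theorem8 (R : realType) (d m : nat) (hd : (0 < d)%N) (hm : (0 < m)%N)
  (A0 A1 : 'M[R]_d) (G : nat -> 'M[R]_d)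
  (hG : forall u : nat, A1 *m G u = G u *m A1) :
  (forall u : nat,
      Xsol m A0 A1 G (u%:Z + 1) - Xsol m A0 A1 G u%:Z
      = A0 *m Xsol m A0 A1 G (u%:Z - m%:Z)
        + Xsol m A0 A1 G (u%:Z - m%:Z) *m A1 + G u)
  /\ (forall u : int, - (m%:Z) <= u <= 0 -> Xsol m A0 A1 G u = 0).
Proof.
split=> [u | u /andP[_ u_le0]]; last by rewrite (Xsol_sum m A0 A1 G (n := 0)) ?big_ord0.
rewrite (Xsol_sum m A0 A1 G (n := u.+1)) ?(Xsol_sum m A0 A1 G (v := u%:Z) (n := u)) //; try lia.
rewrite (Xsol_sum m A0 A1 G (v := u%:Z - m%:Z) (n := u)); last lia.
rewrite -[A0 *m _ + _]/(sylvester A0 A1 _) sylvester_sum big_ord_recr /=.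
rewrite (_ : u%:Z + 1 - m%:Z - u.+1%:Z = 0%:Z - m%:Z); last lia.
rewrite Zfun_Zbin ?Zbin_small // mul1mx addrAC -sumrB; congr (_ + _).
apply: eq_bigr => j _; rewrite -mulmxBl sylvester_mulmxr //.
rewrite (_ : u%:Z + 1 - m%:Z - j.+1%:Z = (u%:Z - m%:Z - j.+1%:Z) + 1); last lia.
rewrite Zfun_recurrence //; last by have := ltn_ord j; lia.
by congr (sylvester _ _ (Zfun _ _ _ _) *m _); lia.
Qed.
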